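(* Let $\mathcal T$ be a tube. If $S_1,S_2$ are two non-isomorphic simple objects of $\mathcal T$ with $\mathrm{Ext}^1_{\mathcal T}(S_1,S_2)=0$, then there exists an object $M$ of $\mathcal T$ such that $\mathrm{Ext}^1_{\mathcal T}(S_1,M)\cong\Bbbk$, $\mathrm{Ext}^1_{\mathcal T}(M,S_2)\cong\Bbbk$, and $\{S_1,S_2,M\}$ is a brick set.
   Context: $\Bbbk$ is algebraically closed. A tube (of rank $r\ge1$) is the $\Bbbk$-linear abelian category of finite-dimensional nilpotent representations of the quiver with $r$ vertices forming an oriented cycle. A brick is an object $M$ with $\mathrm{Hom}(M,M)=\Bbbk$; a brick set is a finite set of bricks $\{X_1,\dots,X_n\}$ with $\dim\mathrm{Hom}(X_i,X_j)=\delta_{ij}$. *)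

From HB Require Import structures.
From mathcomp Require Import all_boot all_order all_algebra.
Set Implicit Arguments. Unset Strict Implicit. Unset Printing Implicit Defensive.
Import GRing.Theory.
Local Open Scope ring_scope.

(* Representations of the cyclic quiver with r vertices 0 -> 1 -> ... -> r-1 -> 0
   (arrow i -> ordS i) over a field K.  Vectors are row vectors: the arrow
   i -> i+1 acts by right multiplication with rmap i. *)
Record rep (K : fieldType) (r : nat) := Rep {
  rdim : 'I_r -> nat;
  rmap : forall i : 'I_r, 'M[K]_(rdim i, rdim (ordS i)) }.

Section Reps.
Variables (K : fieldType) (r : nat).
Implicit Types (M N : rep K r).

Fixpoint pathmx M (i : 'I_r) (k : nat) : 'M[K]_(rdim M i, rdim M (iter k (@ordS r) i)) :=
  match k with
  | 0 => 1%:M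
  | k'.+1 => pathmx M i k' *m rmap M (iter k' (@ordS r) i)
  end.

(* objects of the tube: finite-dimensional nilpotent representations *)
Definition nilpotent_rep M : Prop := exists n : nat, forall i : 'I_r, pathmx M i n = 0.

Definition is_hom M N (phi : forall i : 'I_r, 'M[K]_(rdim M i, rdim N i)) : Prop :=
  forall i : 'I_r, rmap M i *m phi (ordS i) = phi i *m rmap N i.

Definition is_iso M N : Prop :=
  exists (phi : forall i, 'M[K]_(rdim M i, rdim N i))
         (psi : forall i, 'M[K]_(rdim N i, rdim M i)),
    [/\ is_hom phi, is_hom psi,
        forall i, phi i *m psi i = 1%:M & forall i, psi i *m phi i = 1%:M].

Definition is_subrep M (U : forall i : 'I_r, 'M[K]_(rdim M i)) : Prop :=
  forall i : 'I_r, (U i *m rmap M i <= U (ordS i))%MS.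

Definition simple_rep M : Prop :=
  (exists i, 0 < rdim M i)%N /\
  forall U : forall i : 'I_r, 'M[K]_(rdim M i), is_subrep U -> (forall i, U i == 0) \/ (forall i, row_full (U i)).

(* Coordinates: the space of families (phi_i : M_i -> N_i)_i is K^(sum_i dM_i dN_i),
   and that of families (M_i -> N_(i+1))_i is K^(sum_i dM_i dN_(i+1)). *)
Definition famdim M N := (\sum_(i < r) rdim M i * rdim N i)%N.
Definition famdim1 M N := (\sum_(i < r) rdim M i * rdim N (ordS i))%N.

Definition famcomp M N (x : 'rV[K]_(famdim M N)) (i : 'I_r) : 'M[K]_(rdim M i, rdim N i) :=
  vec_mx (@submxrow K r (fun j => rdim M j * rdim N j)%N 1 x i).

(* the standard map  d(phi)_i = A_i phi_(i+1) - phi_i B_i ;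
   Hom(M,N) = ker d  and  Ext^1(M,N) = coker d  (standard resolution) *)
Definition dmap M N (x : 'rV[K]_(famdim M N)) : 'rV[K]_(famdim1 M N) :=
  @mxrow K r (fun j => rdim M j * rdim N (ordS j))%N 1
    (fun i => mxvec (rmap M i *m famcomp x (ordS i) - famcomp x i *m rmap N i)).

Definition dimHom M N : nat := \rank (kermx (lin1_mx (@dmap M N))).
Definition dimExt1 M N : nat := (famdim1 M N - \rank (lin1_mx (@dmap M N)))%N.

Definition brick M : Prop := dimHom M M = 1%N.

Definition zero_rep : rep K r := @Rep K r (fun _ => 0%N) (fun _ => 0).

Definition brick_set (s : seq (rep K r)) : Prop :=
  forall a b, (a < size s)%N -> (b < size s)%N ->
    dimHom (nth zero_rep s a)
           (nth zero_rep s b) = (a == b : nat).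
End Reps.

From mathcomp Require Import all_boot all_order all_algebra.
From HB Require Import structures.
From mathcomp Require Import zify.
Set Implicit Arguments. Unset Strict Implicit. Unset Printing Implicit Defensive.

(* A simple nilpotent representation S(a) is one-dimensional at a single
   vertex a with zero arrows, and Ext^1(S(a), S(b)) is nonzero exactly when
   b = a + 1.  So the hypothesis says a <> b and b <> a + 1, and we take for M the
   uniserial representation supported on the vertices a + 1, ..., b - 1 (a
   nonempty, proper arc of the cycle) with identity arrows.  Its endomorphisms
   are the scalars; it has no support at a or b, so all Homs between distinct
   members of {S(a), S(b), M} vanish; and Ext^1(S(a), M), Ext^1(M, S(b)) are
   the one-dimensional spaces of arrows a -> a + 1 and b - 1 -> b.  Hom and
   Ext^1 are the kernel and cokernel of dmap, so whenever its domain or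
   codomain is zero they reduce to dimension counts. *)

Section CyclicDistance.
Variable r : nat.
Implicit Types (s i j : 'I_r).

Lemma val_iter_ordS i k : val (iter k (@ordS r) i) = (i + k) %% r.
Proof.
elim: k => [|k IHk] /=; first by rewrite addn0 modn_small.
by rewrite IHk -addn1 modnDml -addnA addn1.
Qed.

Definition cyc_dist s i : nat := (i + (r - s)) %% r.

Lemma cyc_dist_lt s i : cyc_dist s i < r.
Proof. by rewrite ltn_pmod // (leq_ltn_trans _ (ltn_ord s)). Qed.

Lemma iter_cyc_dist s i : iter (cyc_dist s i) (@ordS r) s = i.
Proof.
apply: val_inj; rewrite val_iter_ordS /cyc_dist modnDmr.
have -> : s + (i + (r - s)) = i + r by have := ltn_ord s; lia.
by rewrite modnDr modn_small.
Qed.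

Lemma cyc_dist_iter s k : cyc_dist s (iter k (@ordS r) s) = k %% r.
Proof.
rewrite /cyc_dist val_iter_ordS modnDml.
have -> : s + k + (r - s) = k + r by have := ltn_ord s; lia.
by rewrite modnDr.
Qed.

Lemma cyc_dist_inj s : injective (cyc_dist s).
Proof. by move=> i j eq_ij; rewrite -(iter_cyc_dist s i) eq_ij iter_cyc_dist. Qed.

Lemma cyc_dist_id s : cyc_dist s s = 0.
Proof. by have := cyc_dist_iter s 0; rewrite mod0n. Qed.

Lemma cyc_dist_eq0 s i : (cyc_dist s i == 0) = (i == s).
Proof. by rewrite -(cyc_dist_id s) (inj_eq (@cyc_dist_inj s)). Qed.

Lemma cyc_dist_ordS s i : cyc_dist s (ordS i) = (cyc_dist s i).+1 %% r.
Proof. by rewrite -{1}(iter_cyc_dist s i) -iterS cyc_dist_iter. Qed.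

Lemma cyc_dist_ord_pred s i :
  0 < cyc_dist s i -> cyc_dist s (ord_pred i) = (cyc_dist s i).-1.
Proof.
rewrite -{1 3}(ord_predK i) cyc_dist_ordS.
have := cyc_dist_lt s (ord_pred i).
by case: (ltngtP (cyc_dist s (ord_pred i)).+1 r) => [Sd_lt_r _ | // | ->];
  rewrite ?modnn ?modn_small.
Qed.

Lemma cyc_dist_ordS_l i : cyc_dist (ordS i) i = r.-1.
Proof.
have r_gt0 : 0 < r by rewrite (leq_ltn_trans _ (ltn_ord i)).
have iter_r : iter r.-1 (@ordS r) (ordS i) = i.
  by apply: val_inj; rewrite -iterSr prednK // val_iter_ordS modnDr modn_small.
by rewrite -{2}iter_r cyc_dist_iter modn_small // prednK.
Qed.

Lemma ordS_neq i : 1 < r -> ordS i != i.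
Proof.
move=> r_gt1; rewrite -(inj_eq (@cyc_dist_inj i)) cyc_dist_ordS cyc_dist_id.
by rewrite modn_small.
Qed.

End CyclicDistance.

Lemma sum_nat_eq1l (I : finType) (a : I) (F : I -> nat) :
  \sum_i ((i == a) * F i) = F a.
Proof. by rewrite (bigD1 a) //= eqxx mul1n big1 ?addn0 // => i /negbTE ->. Qed.

Lemma sum_nat_eq1r (I : finType) (a : I) (F : I -> nat) :
  \sum_i (F i * (i == a)) = F a.
Proof. by under eq_bigr do rewrite mulnC; exact: sum_nat_eq1l. Qed.

Import GRing.Theory.
Local Open Scope ring_scope.

Lemma mx_dim0 (K : fieldType) m n (A : 'M[K]_(m, n)) : (m = 0)%N \/ (n = 0)%N -> A = 0.
Proof. by case=> dim0; subst; [exact: flatmx0 | exact: thinmx0]. Qed.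

Lemma scalar_mx_trace_le1 (K : fieldType) d (A : 'M[K]_d) : (d <= 1)%N -> A = (\tr A)%:M.
Proof.
case: d A => [|[|d]] A // _; first by rewrite !flatmx0.
by apply/matrixP => i j; rewrite !ord1 !mxE /mxtrace big_ord1 eqxx mulr1n.
Qed.

Section HomExt.
Variables (K : fieldType) (r : nat).
Implicit Types (M N : rep K r).

Lemma famcomp_mxrow M N (B : forall i, 'M[K]_(rdim M i, rdim N i)) i :
  famcomp (@mxrow K r (fun j => rdim M j * rdim N j)%N 1 (fun j => mxvec (B j))) i = B i.
Proof. by rewrite /famcomp mxrowK mxvecK. Qed.

Lemma famcompP M N a (x y : 'rV[K]_(famdim M N)) i :
  famcomp (a *: x + y) i = a *: famcomp x i + famcomp y i.
Proof. by rewrite /famcomp /submxrow !linearP. Qed.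

Lemma famcompZ M N a (x : 'rV[K]_(famdim M N)) i :
  famcomp (a *: x) i = a *: famcomp x i.
Proof. by have := famcompP a x 0 i; rewrite !addr0 /famcomp submxrow0 linear0 addr0. Qed.

Lemma famcomp_inj M N (x y : 'rV[K]_(famdim M N)) :
  (forall i, famcomp x i = famcomp y i) -> x = y.
Proof. by move=> eq_xy; apply/mxrowP => i; apply: (can_inj vec_mxK); exact: eq_xy. Qed.

Lemma dmap_is_linear M N : linear (@dmap K r M N).
Proof.
move=> a x y; apply/mxrowP => i.
rewrite {2}/submxrow linearP /= -!/(submxrow _ _) !mxrowK !famcompP.
apply/(can_inj vec_mxK); rewrite !linearP /= !mxvecK.
by rewrite mulmxDl -scalemxAl scalerBr opprD addrACA.
Qed.

HB.instance Definition _ M N :=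
  GRing.isLinear.Build K _ _ _ (@dmap K r M N) (@dmap_is_linear M N).

Lemma dmap_eq0 M N (x : 'rV[K]_(famdim M N)) :
  dmap x = 0 <-> forall i, rmap M i *m famcomp x (ordS i) = famcomp x i *m rmap N i.
Proof.
split=> [/mxrowP dx0 i | hom_x].
  by move: (dx0 i); rewrite mxrowK submxrow0 => /eqP; rewrite mxvec_eq0 subr_eq0 => /eqP.
by apply/mxrowP => i; rewrite mxrowK submxrow0 hom_x subrr linear0.
Qed.

Lemma dimHomE M N : dimHom M N = (famdim M N - \rank (lin1_mx (@dmap K r M N)))%N.
Proof. by rewrite /dimHom mxrank_ker. Qed.

Lemma dimHom_eq0 M N : famdim M N = 0%N -> dimHom M N = 0%N.
Proof. by move=> famdim0; rewrite dimHomE {1}famdim0. Qed.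

Lemma dimHom_eq_famdim M N : famdim1 M N = 0%N -> dimHom M N = famdim M N.
Proof.
by move=> famdim1_0; rewrite dimHomE; have := rank_leq_col (lin1_mx (@dmap K r M N)); lia.
Qed.

Lemma dimExt1_eq_famdim1 M N : famdim M N = 0%N -> dimExt1 M N = famdim1 M N.
Proof.
by move=> famdim0; rewrite /dimExt1; have := rank_leq_row (lin1_mx (@dmap K r M N)); lia.
Qed.

Lemma dimHom_eq1 M N (v : 'rV[K]_(famdim M N)) :
  v != 0 -> dmap v = 0 -> (forall x, dmap x = 0 -> (x <= v)%MS) -> dimHom M N = 1%N.
Proof.
move=> v_neq0 dv0 ker_v; have rank_v : \rank v = 1%N by rewrite rank_rV v_neq0.
rewrite /dimHom -rank_v; apply/eqmx_rank/andP; split.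
  by apply/row_subP => i; apply: ker_v; rewrite -mul_rV_lin1; apply/sub_kermxP/row_sub.
by apply/sub_kermxP; rewrite mul_rV_lin1.
Qed.

Section PointDims.
Variables (M N : rep K r) (a b : 'I_r).
Hypotheses (dimM : forall i, rdim M i = (i == a) :> nat)
           (dimN : forall i, rdim N i = (i == b) :> nat).

Lemma famdim_pointl : famdim M N = rdim N a.
Proof. by rewrite /famdim; under eq_bigr do rewrite dimM; exact: sum_nat_eq1l. Qed.

Lemma famdim1_pointl : famdim1 M N = rdim N (ordS a).
Proof. by rewrite /famdim1; under eq_bigr do rewrite dimM; exact: sum_nat_eq1l. Qed.

Lemma famdim_pointr : famdim M N = rdim M b.
Proof. by rewrite /famdim; under eq_bigr do rewrite dimN; exact: sum_nat_eq1r. Qed.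

Lemma famdim1_pointr : famdim1 M N = rdim M (ord_pred b).
Proof.
rewrite /famdim1; under eq_bigr do rewrite dimN (can2_eq (@ordSK r) (@ord_predK r)).
exact: sum_nat_eq1r.
Qed.

End PointDims.

Lemma simple_nilpotent_rmap0 M : nilpotent_rep M -> simple_rep M -> forall i, rmap M i = 0.
Proof.
move=> [n path0] [[a dima_gt0] simpleM].
have ker_subrep : is_subrep (fun i => kermx (rmap M i)).
  by move=> i; rewrite mulmx_ker sub0mx.
case: (simpleM _ ker_subrep) => [ker0 | ker_full] i; last first.
  by rewrite -[rmap M i]mul1mx; apply/sub_kermxP/submx_full.
have free_rmap j : row_free (rmap M j).
  have := rank_leq_row (rmap M j); have := ker0 j.
  by rewrite -mxrank_eq0 mxrank_ker /row_free; lia.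
have rank_path k : \rank (pathmx M a k) = rdim M a.
  by elim: k => [|k IHk] /=; rewrite ?mxrank1 // mxrankMfree.
by move: (rank_path n); rewrite path0 mxrank0; lia.
Qed.

Lemma simple_rmap0_point M :
  simple_rep M -> (forall i, rmap M i = 0) -> exists a, forall i, rdim M i = (i == a) :> nat.
Proof.
move=> [[a dima_gt0] simpleM] rmap0; exists a.
pose U i := ((i == a)%:R : K) *: (pid_mx 1 : 'M[K]_(rdim M i)).
have U_subrep : is_subrep U by move=> i; rewrite rmap0 mulmx0 sub0mx.
have rank_Ua : \rank (U a) = 1%N by rewrite /U eqxx scale1r rank_pid_mx.
case: (simpleM _ U_subrep) => [U0 | U_full] i.
  by move: (U0 a); rewrite -mxrank_eq0 rank_Ua.
move: (U_full i); rewrite /row_full.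
case: (eqVneq i a) => [->|neq_ia]; first by rewrite rank_Ua => /eqP.
by rewrite /U (negbTE neq_ia) scale0r mxrank0 => /eqP.
Qed.

Lemma simple_nilpotent_point M : nilpotent_rep M -> simple_rep M ->
  exists2 a, forall i, rdim M i = (i == a) :> nat & forall i, rmap M i = 0.
Proof.
move=> nilM simpleM; have rmap0 := simple_nilpotent_rmap0 nilM simpleM.
by have [a dimM] := simple_rmap0_point simpleM rmap0; exists a.
Qed.

Lemma zero_reps_iso M N : (forall i, rdim M i = rdim N i) ->
  (forall i, rmap M i = 0) -> (forall i, rmap N i = 0) -> is_iso M N.
Proof.
move=> dimMN rmapM0 rmapN0.
exists (fun i => pid_mx (rdim M i)), (fun i => pid_mx (rdim M i)).
split=> i; rewrite ?rmapM0 ?rmapN0 ?mul0mx ?mulmx0 // mul_pid_mx -dimMN !minnn.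
  exact: pid_mx_1.
by rewrite dimMN pid_mx_1.
Qed.

Section Points.
Variables (M N : rep K r) (a : 'I_r).
Hypothesis dimM : forall i, rdim M i = (i == a) :> nat.

Lemma dimHom_pointl : rdim N a = 0%N -> dimHom M N = 0%N.
Proof. by move=> dimNa; rewrite dimHom_eq0 // (famdim_pointl _ dimM). Qed.

Lemma dimHom_pointr : rdim N a = 0%N -> dimHom N M = 0%N.
Proof. by move=> dimNa; rewrite dimHom_eq0 // (famdim_pointr _ dimM). Qed.

Lemma dimExt1_pointl : rdim N a = 0%N -> dimExt1 M N = rdim N (ordS a).
Proof.
by move=> dimNa; rewrite dimExt1_eq_famdim1 ?(famdim1_pointl _ dimM) // (famdim_pointl _ dimM).
Qed.

Lemma dimExt1_pointr : rdim N a = 0%N -> dimExt1 N M = rdim N (ord_pred a).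
Proof.
by move=> dimNa; rewrite dimExt1_eq_famdim1 ?(famdim1_pointr _ dimM) // (famdim_pointr _ dimM).
Qed.

Lemma dimHom_points (b : 'I_r) : (1 < r)%N ->
  (forall i, rdim N i = (i == b) :> nat) -> dimHom M N = (a == b) :> nat.
Proof.
move=> r_gt1 dimN; have [eq_ab|neq_ab] := eqVneq a b; last first.
  by rewrite dimHom_pointl ?dimN ?(negbTE neq_ab).
subst b; rewrite dimHom_eq_famdim; first by rewrite (famdim_pointl _ dimM) dimN eqxx.
by rewrite (famdim1_pointl _ dimM) dimN (negbTE (ordS_neq _ r_gt1)).
Qed.

End Points.

Lemma pathmx_dim0 M i k j :
  (j < k)%N -> rdim M (iter j (@ordS r) i) = 0%N -> pathmx M i k = 0.
Proof.
move=> j_lt_k dim0; elim: k j_lt_k => [|k IHk] //=.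
rewrite ltnS leq_eqVlt => /orP[/eqP eq_jk | j_lt_k]; last by rewrite IHk // mul0mx.
by rewrite -eq_jk (mx_dim0 (pathmx M i j)) ?mul0mx //; right.
Qed.

End HomExt.

Section IntervalRep.
Variables (K : fieldType) (r : nat) (s : 'I_r) (l : nat).
Hypotheses (l_gt0 : (0 < l)%N) (l_lt_r : (l < r)%N).

(* The uniserial representation with top S(s) and length l: one-dimensional
   at s, s + 1, ..., s + l - 1, with identity arrows between them. *)
Definition interval_rep : rep K r :=
  @Rep K r (fun i => (cyc_dist s i < l)%N : nat)
    (fun i => const_mx ((cyc_dist s i).+1 < l)%N%:R).

Lemma interval_rep_nilpotent : nilpotent_rep interval_rep.
Proof.
exists r => i; pose z := iter r.-1 (@ordS r) s.
apply: (@pathmx_dim0 _ _ _ _ _ (cyc_dist i z)); first exact: cyc_dist_lt.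
by rewrite iter_cyc_dist /= /z cyc_dist_iter modn_small; lia.
Qed.

Lemma interval_rep_brick : brick interval_rep.
Proof.
pose v := @mxrow K r (fun j => rdim interval_rep j * rdim interval_rep j)%N 1
   (fun j => mxvec (1%:M : 'M[K]_(rdim interval_rep j))).
have v_id i : famcomp v i = 1%:M by rewrite famcomp_mxrow.
apply: (@dimHom_eq1 _ _ _ _ v).
- apply/eqP => v0; have := v_id s; rewrite v0 /famcomp submxrow0 linear0.
  by move/(congr1 mxrank); rewrite mxrank0 mxrank1 /= cyc_dist_id l_gt0.
- by apply/dmap_eq0 => i; rewrite !v_id mulmx1 mul1mx.
move=> x /dmap_eq0 hom_x; pose t i := \tr (famcomp x i).
have x_scalar i : famcomp x i = (t i)%:M.
  exact: scalar_mx_trace_le1 (leq_b1 _).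
have t_const k : (k < l)%N -> t (iter k (@ordS r) s) = t s.
  elim: k => [//|k IHk] k_lt; rewrite -IHk 1?ltnW //.
  set i := iter k (@ordS r) s.
  have dist_i : cyc_dist s i = k by rewrite cyc_dist_iter modn_small //; lia.
  have dist_Si : cyc_dist s (ordS i) = k.+1.
    by rewrite cyc_dist_ordS dist_i modn_small //; lia.
  have dim_i : (0 < rdim interval_rep i)%N by rewrite /= dist_i; case: ltnP; lia.
  have dim_Si : (0 < rdim interval_rep (ordS i))%N by rewrite /= dist_Si k_lt.
  move: (hom_x i); rewrite !x_scalar /= mul_mx_scalar mul_scalar_mx.
  move/matrixP => /(_ (Ordinal dim_i) (Ordinal dim_Si)).
  by rewrite !mxE dist_i k_lt !mulr1.
have -> : x = t s *: v.
  apply: famcomp_inj => i; rewrite famcompZ v_id scalemx1 x_scalar.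
  case: (ltnP (cyc_dist s i) l) => [dist_lt | dist_ge].
    by rewrite -(t_const _ dist_lt) iter_cyc_dist.
  by rewrite !(mx_dim0 (_%:M)) //; left; rewrite /= ltnNge dist_ge.
by rewrite scalemx_sub.
Qed.

End IntervalRep.

Local Close Scope ring_scope.

Theorem lemma5p3 (K : closedFieldType) (r : nat) (hr : (0 < r)%N)
    (S1 S2 : rep K r) :
  nilpotent_rep S1 -> nilpotent_rep S2 ->
  simple_rep S1 -> simple_rep S2 -> ~ is_iso S1 S2 ->
  dimExt1 S1 S2 = 0%N ->
  exists M : rep K r,
    [/\ nilpotent_rep M, dimExt1 S1 M = 1%N, dimExt1 M S2 = 1%N
      & brick_set [:: S1; S2; M]].
Proof.
move=> nil1 nil2 simple1 simple2 not_iso ext0.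
have [a dimS1 rmapS1] := simple_nilpotent_point nil1 simple1.
have [b dimS2 rmapS2] := simple_nilpotent_point nil2 simple2.
have neq_ab : a != b.
  apply/eqP => eq_ab; apply: not_iso.
  by apply: zero_reps_iso => // i; rewrite dimS1 dimS2 eq_ab.
have r_gt1 : 1 < r.
  by move: neq_ab; rewrite -(inj_eq val_inj) /=; have := ltn_ord a; have := ltn_ord b; lia.
have neq_Sa_b : ordS a != b.
  by move: ext0; rewrite (dimExt1_pointl dimS1) dimS2 ?(negbTE neq_ab) //; case: eqP.
set s := ordS a; set l := cyc_dist s b.
have l_gt0 : 0 < l by rewrite lt0n cyc_dist_eq0 eq_sym.
have l_lt : l < r.-1.
  have : l != cyc_dist s a by rewrite (inj_eq (@cyc_dist_inj _ s)) eq_sym.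
  by rewrite cyc_dist_ordS_l; have := cyc_dist_lt s b; rewrite -/l; lia.
set M := interval_rep K s l.
have dimMa : rdim M a = 0 by rewrite /= cyc_dist_ordS_l; case: ltnP => //; lia.
have dimMb : rdim M b = 0 by rewrite /= ltnn.
exists M; split.
- by apply: interval_rep_nilpotent; lia.
- by rewrite (dimExt1_pointl dimS1 dimMa) /= cyc_dist_id l_gt0.
- by rewrite (dimExt1_pointr dimS2 dimMb) /= cyc_dist_ord_pred // ltn_predL l_gt0.
case=> [|[|[|i]]] [|[|[|j]]] //= _ _.
- by rewrite (dimHom_points dimS1 r_gt1 dimS1) eqxx.
- by rewrite (dimHom_points dimS1 r_gt1 dimS2) (negbTE neq_ab).
- exact: dimHom_pointl dimS1 dimMa.
- by rewrite (dimHom_points dimS2 r_gt1 dimS1) eq_sym (negbTE neq_ab).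
- by rewrite (dimHom_points dimS2 r_gt1 dimS2) eqxx.
- exact: dimHom_pointl dimS2 dimMb.
- exact: dimHom_pointr dimS1 dimMa.
- exact: dimHom_pointr dimS2 dimMb.
- by apply: interval_rep_brick => //; lia.
Qed.
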